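(* Let $N\ge 2$, $n\ge1$. For $i=1,\dots,N$ let $f_i:\mathbb{R}^n\to\mathbb{R}$ be twice continuously differentiable with $\mu I_n\preceq\nabla^2 f_i(x)\preceq L I_n$ for all $x$ ($0<\mu\le L$), and with Lipschitz Hessians: $\|\nabla^2 f_i(x)-\nabla^2 f_i(y)\|\le \bar L\|x-y\|$ for all $x,y$ and all $i$. Let $f=\frac1N\sum_i f_i$ with unique minimizer $x^\star$. For $\mathbf{x}\in\mathbb{R}^{N\times n}$ with rows $x_1,\dots,x_N$ define $H_{tr}(\mathbf{x})=\frac1N\sum_{i=1}^N\nabla^2 f_i(x_i)$ and $H_{app}(\mathbf{x})=\big(\frac1N\sum_{i=1}^N(\nabla^2 f_i(x_i))^{-1}\big)^{-1}$, and assume there is $\gamma$ with $\|H_{tr}(\mathbf{x})-H_{app}(\mathbf{x})\|\le\gamma$ for all $\mathbf{x}\in\mathbb{R}^{N\times n}$. Let $W\in\mathbb{R}^{N\times N}$ be a symmetric doubly stochastic consensus matrix of a connected undirected graph with $\sigma=\|W-\frac1N\mathbf{1}\mathbf{1}^T\|_2<1$. Consider the Network-GIANT iteration $$\mathbf{x}_{k+1}=W\mathbf{x}_k-\eta\,\mathbf{y}_k,\qquad \mathbf{s}_{k+1}=W\mathbf{s}_k+\nabla_{k+1}-\nabla_k,\qquad \mathbf{s}_0=\nabla_0,$$ where $\nabla_k\in\mathbb{R}^{N\times n}$ has $i$-th row $\nabla f_i(x_i^k)$ ($x_i^k$ the $i$-th row of $\mathbf{x}_k$, gradients as row vectors) and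 $\mathbf{y}_k$ has $i$-th row $s_i^k(\nabla^2 f_i(x_i^k))^{-1}$ ($s_i^k$ the $i$-th row of $\mathbf{s}_k$). Let $\bar x_k=\frac1N\mathbf{1}^T\mathbf{x}_k$ and $g_k=\frac1N\mathbf{1}^T\nabla_k$. If $\gamma<\mu$ and $0<\eta<1$, then for every $k\ge0$, $$\|\bar x_{k+1}-x^\star\|\le\Big(1-\eta\big(1-\tfrac{\gamma}{\mu}\big)\Big)\|\bar x_k-x^\star\|+\frac{\eta\bar L}{\mu\sqrt N}\|\mathbf{x}_k-\mathbf{1}\bar x_k\|\,\|\bar x_k-x^\star\|+\frac{\eta\bar L}{2\mu}\|\bar x_k-x^\star\|^2+\frac{\eta}{\mu\sqrt N}\|\mathbf{s}_k-\mathbf{1}g_k\|+\frac{\eta L}{\mu\sqrt N}\|\mathbf{x}_k-\mathbf{1}\bar x_k\|.$$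
   Context: Vector norms $\|\cdot\|$ are Euclidean 2-norms; for matrices $\|\cdot\|$ denotes the Frobenius norm and $\|\cdot\|_2$ the spectral norm. $\mathbf{1}\in\mathbb{R}^N$ is the all-ones column vector. Points of $\mathbb{R}^n$ are treated as row vectors where convenient. *)

From HB Require Import structures.
From mathcomp Require Import all_boot all_order all_algebra.
From mathcomp Require Import all_classical all_reals all_analysis.
Set Implicit Arguments. Unset Strict Implicit. Unset Printing Implicit Defensive.
Import Order.TTheory GRing.Theory Num.Theory.
Import numFieldNormedType.Exports.
Local Open Scope classical_set_scope.
Local Open Scope ring_scope.

Section Defs.
Variable R : realType.

(* Frobenius norm of a matrix; for a row vector this is the Euclidean norm. *)
Definition frob (m k : nat) (A : 'M[R]_(m, k)) : R :=
  Num.sqrt (\sum_(i < m) \sum_(j < k) A i j ^+ 2).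

Definition specnorm (m : nat) (A : 'M[R]_m) : R :=
  sup [set frob (A *m v) | v in [set v : 'cV[R]_m | frob v <= 1]].

Definition basis_vec (n : nat) (j : 'I_n) : 'rV[R]_n := delta_mx 0 j.

Definition partial (n : nat) (j : 'I_n) (f : 'rV[R]_n -> R) : 'rV[R]_n -> R :=
  fun x => derive f x (basis_vec j).

Definition gradient (n : nat) (f : 'rV[R]_n -> R) (x : 'rV[R]_n) : 'rV[R]_n :=
  \row_j partial j f x.

Definition hessian (n : nat) (f : 'rV[R]_n -> R) (x : 'rV[R]_n) : 'M[R]_n :=
  \matrix_(j, l) partial l (partial j f) x.

Definition C2 (n : nat) (f : 'rV[R]_n -> R) : Prop :=
  [/\ forall x, differentiable f x,
      forall (j : 'I_n) x, differentiable (partial j f) x &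
      forall (j l : 'I_n), continuous (partial l (partial j f))].

Definition loewner_between (n : nat) (mu L : R) (A : 'M[R]_n) : Prop :=
  forall v : 'rV[R]_n,
    mu * frob v ^+ 2 <= (v *m A *m v^T) 0 0 <= L * frob v ^+ 2.

Definition rowv (N n : nat) (i : 'I_N) (X : 'M[R]_(N, n)) : 'rV[R]_n := row i X.

Definition grad_stack (N n : nat) (f : 'I_N -> 'rV[R]_n -> R) (X : 'M[R]_(N, n))
  : 'M[R]_(N, n) := \matrix_(i, j) gradient (f i) (row i X) 0 j.

Definition newton_stack (N n : nat) (f : 'I_N -> 'rV[R]_n -> R)
  (X S : 'M[R]_(N, n)) : 'M[R]_(N, n) :=
  \matrix_(i, j) (row i S *m invmx (hessian (f i) (row i X))) 0 j.

Definition H_tr (N n : nat) (f : 'I_N -> 'rV[R]_n -> R) (X : 'M[R]_(N, n)) : 'M[R]_n :=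
  N%:R^-1 *: \sum_(i < N) hessian (f i) (row i X).

Definition H_app (N n : nat) (f : 'I_N -> 'rV[R]_n -> R) (X : 'M[R]_(N, n)) : 'M[R]_n :=
  invmx (N%:R^-1 *: \sum_(i < N) invmx (hessian (f i) (row i X))).

Definition avg (N n : nat) (X : 'M[R]_(N, n)) : 'rV[R]_n :=
  N%:R^-1 *: (const_mx 1 : 'rV[R]_N) *m X.

Definition ones_times (N n : nat) (x : 'rV[R]_n) : 'M[R]_(N, n) :=
  (const_mx 1 : 'cV[R]_N) *m x.

Definition consensus_matrix (N : nat) (W : 'M[R]_N) : Prop :=
  [/\ W^T = W,
      forall i j, 0 <= W i j,
      forall i, \sum_(j < N) W i j = 1,
      forall j, \sum_(i < N) W i j = 1 &
      exists e : rel 'I_N,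
        [/\ symmetric e, irreflexive e,
            forall i j, i != j -> (0 < W i j) = e i j &
            forall i j, connect e i j]].

End Defs.

From HB Require Import structures.
From mathcomp Require Import all_boot all_order all_algebra.
From mathcomp Require Import all_classical all_reals all_analysis.
From mathcomp Require Import ring lra.
Import Order.TTheory GRing.Theory Num.Theory.
Import numFieldNormedType.Exports.
Local Open Scope classical_set_scope.
Local Open Scope ring_scope.
Set Implicit Arguments. Unset Strict Implicit. Unset Printing Implicit Defensive.

(* Averaging the x-update over the agents (W is column stochastic) gives
     xbar' - xstar = (1 - eta) d - eta (d E Hinv + G Hinv + T),
   where d = xbar - xstar, Hinv is the average of the inverse local Hessians (so
   that H_app = Hinv^-1 and E = H_tr - H_app), T averages the tracking errors
   (s_i - g) H_i^-1, and G averages the local Taylor errors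
   grad f_i(x_i) - grad f_i(xstar) - d H_i, using sum_i grad f_i(xstar) = 0.
   As |v Hinv| <= |v| / mu, the three terms are controlled by the Hessian gap gamma,
   by the tracking error, and by the Lipschitz constants L of the gradients and
   Lbar of the Hessians (a second-order Taylor estimate along a segment); the row
   norms of a matrix sum to at most sqrt N times its Frobenius norm. The Loewner
   bounds yield the operator-norm bound L only because Hessians of C^2 functions
   are symmetric (Schwarz's theorem). *)

Section FrobeniusNorm.
Variable R : realType.

Lemma sum_sqr_ge0 (I : finType) (a : I -> R) : 0 <= \sum_i a i ^+ 2.
Proof. by apply: sumr_ge0 => i _; exact: sqr_ge0. Qed.

Lemma cauchy_schwarz_sqr (I : finType) (a b : I -> R) :
  (\sum_i a i * b i) ^+ 2 <= (\sum_i a i ^+ 2) * (\sum_i b i ^+ 2).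
Proof.
set A := \sum_i a i ^+ 2; set B := \sum_i b i ^+ 2; set C := \sum_i a i * b i.
have lagrange : \sum_i \sum_j (a i * b j - a j * b i) ^+ 2 = 2 * (A * B - C ^+ 2).
  transitivity (\sum_i \sum_j (a i ^+ 2 * b j ^+ 2 + b i ^+ 2 * a j ^+ 2
                               - 2 * (a i * b i) * (a j * b j))).
    by apply: eq_bigr => i _; apply: eq_bigr => j _; ring.
  under eq_bigr do rewrite sumrB big_split /= -!mulr_sumr.
  rewrite sumrB big_split /= -!mulr_suml -mulr_sumr -/A -/B -/C; ring.
rewrite -subr_ge0 -(pmulr_rge0 _ (ltr0Sn R 1)) -lagrange.
by apply: sumr_ge0 => i _; exact: sum_sqr_ge0.
Qed.

Lemma cauchy_schwarz (I : finType) (a b : I -> R) :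
  \sum_i a i * b i <= Num.sqrt (\sum_i a i ^+ 2) * Num.sqrt (\sum_i b i ^+ 2).
Proof.
rewrite -sqrtrM ?sum_sqr_ge0 //; apply: le_trans (ler_norm _) _.
by rewrite -sqrtr_sqr ler_sqrt ?cauchy_schwarz_sqr // mulr_ge0 ?sum_sqr_ge0.
Qed.

Implicit Types (m k p : nat).

Lemma mx_entryB m k (A B : 'M[R]_(m, k)) i j : (A - B) i j = A i j - B i j.
Proof. by rewrite !mxE. Qed.

Definition frob_dot m k (A B : 'M[R]_(m, k)) := \sum_i \sum_j A i j * B i j.

Lemma frob_ge0 m k (A : 'M[R]_(m, k)) : 0 <= frob A.
Proof. exact: sqrtr_ge0. Qed.

Lemma frob_sqr m k (A : 'M[R]_(m, k)) : frob A ^+ 2 = \sum_i \sum_j A i j ^+ 2.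
Proof. by rewrite sqr_sqrtr // pair_bigA sum_sqr_ge0. Qed.

Lemma frob_eq0 m k (A : 'M[R]_(m, k)) : (frob A == 0) = (A == 0).
Proof.
apply/idP/eqP => [|->]; last first.
  by rewrite /frob big1 ?sqrtr0 // => i _; rewrite big1 // => j _; rewrite mxE expr0n.
rewrite -sqrf_eq0 frob_sqr pair_bigA psumr_eq0 => [/allP A0|p _]; last exact: sqr_ge0.
apply/matrixP => i j; apply/eqP; rewrite mxE -sqrf_eq0.
exact: A0 (i, j) (mem_index_enum _).
Qed.

Lemma frob0 m k : frob (0 : 'M[R]_(m, k)) = 0.
Proof. by apply/eqP; rewrite frob_eq0. Qed.

Lemma frob_gt0 m k (A : 'M[R]_(m, k)) : (0 < frob A) = (A != 0).
Proof. by rewrite lt_def frob_eq0 frob_ge0 andbT. Qed.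

Lemma frob_dot_le m k (A B : 'M[R]_(m, k)) : frob_dot A B <= frob A * frob B.
Proof. by rewrite /frob_dot /frob !pair_bigA; exact: cauchy_schwarz. Qed.

Lemma frob_sqrD m k (A B : 'M[R]_(m, k)) :
  frob (A + B) ^+ 2 = frob A ^+ 2 + 2 * frob_dot A B + frob B ^+ 2.
Proof.
rewrite !frob_sqr /frob_dot mulr_sumr -!big_split; apply: eq_bigr => i _.
rewrite mulr_sumr -!big_split; apply: eq_bigr => j _; rewrite mxE /=; ring.
Qed.

Lemma ler_frobD m k (A B : 'M[R]_(m, k)) : frob (A + B) <= frob A + frob B.
Proof.
rewrite -(ler_pXn2r (isT : (0 < 2)%N)) ?nnegrE ?addr_ge0 ?frob_ge0 //.
by rewrite frob_sqrD sqrrD -mulr_natr; have := frob_dot_le A B; lra.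
Qed.

Lemma frobZ m k (c : R) (A : 'M[R]_(m, k)) : frob (c *: A) = `|c| * frob A.
Proof.
rewrite /frob -sqrtr_sqr -sqrtrM ?sqr_ge0 // mulr_sumr; congr Num.sqrt.
apply: eq_bigr => i _; rewrite mulr_sumr; apply: eq_bigr => j _.
by rewrite mxE exprMn.
Qed.

Lemma frobN m k (A : 'M[R]_(m, k)) : frob (- A) = frob A.
Proof. by rewrite -scaleN1r frobZ normrN normr1 mul1r. Qed.

Lemma ler_frobB m k (A B : 'M[R]_(m, k)) : frob (A - B) <= frob A + frob B.
Proof. by rewrite -(frobN B) ler_frobD. Qed.

Lemma ler_frob_sum m k (I : finType) (F : I -> 'M[R]_(m, k)) :
  frob (\sum_i F i) <= \sum_i frob (F i).
Proof.
apply: (big_ind2 (fun A r => frob A <= r)) => //.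
- by rewrite frob0.
- by move=> A r B s hA hB; apply: le_trans (ler_frobD A B) (lerD hA hB).
Qed.

Lemma ler_frob_mulmx m k p (A : 'M[R]_(m, k)) (B : 'M[R]_(k, p)) :
  frob (A *m B) <= frob A * frob B.
Proof.
rewrite -(ler_pXn2r (isT : (0 < 2)%N)) ?nnegrE ?mulr_ge0 ?frob_ge0 //.
rewrite exprMn !frob_sqr mulr_suml; apply: ler_sum => i _.
rewrite [X in _ * X]exchange_big mulr_sumr; apply: ler_sum => l _.
by rewrite mxE; exact: cauchy_schwarz_sqr.
Qed.

Lemma frob_rows m k (A : 'M[R]_(m, k)) : frob A ^+ 2 = \sum_i frob (row i A) ^+ 2.
Proof.
rewrite frob_sqr; apply: eq_bigr => i _; rewrite frob_sqr big_ord1.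
by apply: eq_bigr => j _; rewrite mxE.
Qed.

Lemma sum_frob_rows_le m k (A : 'M[R]_(m, k)) :
  \sum_i frob (row i A) <= Num.sqrt m%:R * frob A.
Proof.
have := cauchy_schwarz (fun _ : 'I_m => 1) (fun i => frob (row i A)).
rewrite -frob_rows sqrtr_sqr ger0_norm ?frob_ge0 //.
under eq_bigr do rewrite mul1r.
by under [in X in _ <= X -> _]eq_bigr do rewrite expr1n; rewrite sumr_const card_ord.
Qed.

Lemma frob_dot_row k (u v : 'rV[R]_k) : frob_dot u v = (u *m v^T) 0 0.
Proof. by rewrite /frob_dot big_ord1 mxE; apply: eq_bigr => j _; rewrite mxE. Qed.

Lemma frob_row_sqr k (u : 'rV[R]_k) : frob u ^+ 2 = (u *m u^T) 0 0.
Proof. by rewrite -frob_dot_row frob_sqr; apply: eq_bigr => i _; apply: eq_bigr => j _. Qed.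

Lemma form_le_frob k (u v : 'rV[R]_k) (A : 'M[R]_k) :
  (u *m A *m v^T) 0 0 <= frob u * frob A * frob v.
Proof.
rewrite -frob_dot_row; apply: le_trans (frob_dot_le _ _) _.
by rewrite ler_wpM2r ?frob_ge0 ?ler_frob_mulmx.
Qed.

Lemma frob_le_dual k (e : 'rV[R]_k) (c : R) : 0 <= c ->
  (forall u : 'rV[R]_k, (e *m u^T) 0 0 <= c * frob u) -> frob e <= c.
Proof.
move=> c0 he; have [->|e_neq0] := eqVneq (frob e) 0; first by [].
by have := he e; rewrite -frob_row_sqr expr2 ler_pM2r // lt_def e_neq0 frob_ge0.
Qed.

End FrobeniusNorm.

Section PositiveDefinite.
Variables (R : realType) (n : nat).
Implicit Types (A : 'M[R]_n) (u v : 'rV[R]_n).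

Lemma form_trmx A u v : (v *m A *m u^T) 0 0 = (u *m A^T *m v^T) 0 0.
Proof.
have -> : u *m A^T *m v^T = (v *m A *m u^T)^T by rewrite !trmx_mul trmxK mulmxA.
by rewrite [RHS]mxE.
Qed.

Definition posdef A := forall v, v != 0 -> 0 < (v *m A *m v^T) 0 0.

Lemma posdef_unitmx A : posdef A -> A \in unitmx.
Proof.
move=> pA; rewrite -row_free_unit; apply: inj_row_free => v vA0.
apply/eqP; apply: contraT => /pA.
by rewrite vA0 mul0mx mxE ltxx.
Qed.

Lemma posdef_invmx A : posdef A -> posdef (invmx A).
Proof.
move=> pA v v_neq0; set w := v *m invmx A.
have wA : w *m A = v by rewrite mulmxKV ?posdef_unitmx.
have w_neq0 : w != 0 by apply: contraNneq v_neq0 => w0; rewrite -wA w0 mul0mx.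
by rewrite -wA trmx_mul mulmxA -form_trmx; exact: pA.
Qed.

Lemma posdefZ (c : R) A : 0 < c -> posdef A -> posdef (c *: A).
Proof.
by move=> c0 pA v /pA vAv; rewrite -scalemxAr -scalemxAl mxE mulr_gt0.
Qed.

Lemma posdef_sum (I : finType) (i0 : I) (A : I -> 'M[R]_n) :
  (forall i, posdef (A i)) -> posdef (\sum_i A i).
Proof.
move=> pA v v_neq0; rewrite mulmx_sumr mulmx_suml summxE (bigD1 i0) //=.
apply: lt_le_trans (pA i0 v v_neq0) _; rewrite lerDl.
by apply: sumr_ge0 => i _; exact: ltW (pA i v v_neq0).
Qed.

Section Loewner.
Variables (mu L : R) (A : 'M[R]_n).
Hypothesis hA : loewner_between mu L A.

Lemma loewner_posdef : 0 < mu -> posdef A.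
Proof.
move=> mu0 v v_neq0; have /andP[lo _] := hA v; apply: lt_le_trans lo.
by rewrite mulr_gt0 // exprn_gt0 // frob_gt0.
Qed.

Lemma loewner_mulmx_ge v : 0 < mu -> mu * frob v <= frob (v *m A).
Proof.
move=> mu0; have [->|v_neq0] := eqVneq (frob v) 0; first by rewrite mulr0 frob_ge0.
rewrite -(ler_pM2r (_ : 0 < frob v)); last by rewrite lt_def v_neq0 frob_ge0.
have /andP[lo _] := hA v; rewrite -mulrA -expr2; apply: le_trans lo _.
by rewrite -frob_dot_row frob_dot_le.
Qed.

Lemma loewner_invmx_le v : 0 < mu -> frob (v *m invmx A) <= frob v / mu.
Proof.
move=> mu0; have Au := posdef_unitmx (loewner_posdef mu0).
by rewrite ler_pdivlMr // mulrC -{2}(mulmxKV Au v) loewner_mulmx_ge.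
Qed.

Lemma loewner_form_le u v : 0 <= mu -> A^T = A ->
  (u *m A *m v^T) 0 0 <= L * frob u * frob v.
Proof.
move=> mu0 AT.
have [->|u_neq0] := eqVneq u 0; first by rewrite !mul0mx mxE frob0 mulr0 mul0r.
have [->|v_neq0] := eqVneq v 0; first by rewrite trmx0 mulmx0 mxE frob0 mulr0.
have [up vp] : 0 < frob u /\ 0 < frob v by rewrite !frob_gt0.
have L0 : 0 <= L.
  have /andP[lo hi] := hA u; have := le_trans lo hi.
  by rewrite ler_pM2r ?exprn_gt0 // => /(le_trans mu0).
pose q (x y : 'rV[R]_n) := (x *m A *m y^T) 0 0.
have qDl (x y z : 'rV[R]_n) : q (x + y) z = q x z + q y z by rewrite /q !mulmxDl [LHS]mxE.
have qNl (x y : 'rV[R]_n) : q (- x) y = - q x y by rewrite /q !mulNmx [LHS]mxE.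
have qC (x y : 'rV[R]_n) : q x y = q y x by rewrite /q form_trmx AT.
(* Polarization; the lower Loewner bound only serves to drop the (a - b) term. *)
have polar (a b : 'rV[R]_n) : 4 * q a b <= L * frob (a + b) ^+ 2.
  have /andP[_ hi] := hA (a + b); have /andP[lo _] := hA (a - b).
  have : 0 <= mu * frob (a - b) ^+ 2 by rewrite mulr_ge0 ?sqr_ge0.
  move: hi lo; rewrite -/(q (a + b) (a + b)) -/(q (a - b) (a - b)).
  rewrite !qDl ![q _ (_ + _)]qC !qDl ![q _ (- _)]qC !qNl (qC b a).
  by rewrite [q b (- b)]qC qNl opprK; lra.
(* Rescale u and v to the common norm |u| |v|. *)
pose a := frob v *: u; pose b := frob u *: v.
have qZl c x y : q (c *: x) y = c * q x y by rewrite /q -!scalemxAl [LHS]mxE.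
have ab : q a b = frob u * frob v * q u v.
  by rewrite qZl qC qZl qC mulrA (mulrC (frob v)).
have ab_le : frob (a + b) <= 2 * (frob u * frob v).
  apply: le_trans (ler_frobD a b) _.
  by rewrite !frobZ !ger0_norm ?frob_ge0 // (mulrC (frob v)) mulr_natl mulr2n.
have uv0 : 0 < 4 * (frob u * frob v) by rewrite !mulr_gt0.
rewrite -(ler_pM2l uv0).
have -> : 4 * (frob u * frob v) * q u v = 4 * q a b by rewrite ab [RHS]mulrA.
apply: le_trans (polar a b) _.
have -> : 4 * (frob u * frob v) * (L * frob u * frob v) =
          L * (2 * (frob u * frob v)) ^+ 2 by ring.
by rewrite ler_wpM2l // ler_pXn2r ?nnegrE ?frob_ge0 ?mulr_ge0 ?frob_ge0.
Qed.

End Loewner.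
End PositiveDefinite.

Section SecondDerivatives.
Variables (R : realType) (n : nat).
Implicit Types (g : 'rV[R]_n -> R) (a b d p x : 'rV[R]_n).

Lemma is_derive_line g a d t : differentiable g (t *: d + a) ->
  is_derive t 1 (fun s : R => g (s *: d + a)) ('D_d g (t *: d + a)).
Proof.
move=> dg; pose gl s := g (s *: d + a).
have quotE : (fun h : R => h^-1 *: ((gl \o shift t) (h *: 1) - gl t)) =
             (fun h : R => h^-1 *: ((g \o shift (t *: d + a)) (h *: d) - g (t *: d + a))).
  by apply: funext => h; rewrite /gl /= [h%:A]mulr1 scalerDl addrA.
apply: DeriveDef; last by rewrite /derive quotE.
by rewrite /derivable quotE; exact: diff_derivable.
Qed.

Lemma derive_partialE g p (v : 'rV[R]_n) : differentiable g p ->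
  'D_v g p = \sum_l v 0 l * partial l g p.
Proof.
move=> dg; rewrite deriveE // {1}(row_sum_delta v) linear_sum.
by apply: eq_bigr => l _; rewrite linearZ /= /partial deriveE.
Qed.

Lemma second_difference_mvt g a b x (h k : R) :
  (forall p, differentiable g p) -> (forall p, differentiable ('D_a g) p) ->
  0 < h -> 0 < k ->
  exists s t, [/\ 0 < s < h, 0 < t < k &
    g (h *: a + (k *: b + x)) - g (h *: a + x) - (g (k *: b + x) - g x) =
    h * k * 'D_b ('D_a g) (t *: b + (s *: a + x))].
Proof.
move=> dg dDg h0 k0.
pose phi (s : R) := g (s *: a + (k *: b + x)) - g (s *: a + x).
pose dphi (s : R) := 'D_a g (s *: a + (k *: b + x)) - 'D_a g (s *: a + x).
have phi' (s : R) : is_derive s 1 phi (dphi s) by apply: is_deriveB; exact: is_derive_line.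
have phi_cont : {within `[0, h], continuous phi}.
  by apply: derivable_within_continuous => s _; case: (phi' s).
have [s s_in phiE] := MVT h0 (fun s _ => phi' s) phi_cont.
pose chi (t : R) := 'D_a g (t *: b + (s *: a + x)).
have chi' (t : R) : is_derive t 1 chi ('D_b ('D_a g) (t *: b + (s *: a + x))).
  exact: is_derive_line.
have chi_cont : {within `[0, k], continuous chi}.
  by apply: derivable_within_continuous => t _; case: (chi' t).
have [t t_in chiE] := MVT k0 (fun t _ => chi' t) chi_cont.
exists s, t; split; [by move: s_in; rewrite in_itv | by move: t_in; rewrite in_itv |].
have dphiE : dphi s = chi k - chi 0 by rewrite /dphi /chi scale0r add0r addrCA.
move: phiE; rewrite dphiE chiE /phi !scale0r !add0r !subr0 => ->; ring.
Qed.

Lemma near_small_steps (P : 'rV[R]_n -> Prop) a b x :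
  (\forall y \near x, P y) ->
  exists2 h, 0 < h & forall s t, 0 < s < h -> 0 < t < h -> P (t *: b + (s *: a + x)).
Proof.
move=> /nbhs_normP[del del0 hP]; set c := `|a| + `|b| + 1.
have c0 : 0 < c by rewrite ltr_wpDl // addr_ge0.
exists (del / c) => [|s t /andP[s0 sh] /andP[t0 th]]; first by rewrite divr_gt0.
apply: hP; rewrite /= addrA opprD addrCA subrr addr0 normrN.
apply: le_lt_trans (ler_normD _ _) _; rewrite !normrZ !ger0_norm ?(ltW s0) ?(ltW t0) //.
have -> : del = del / c * c by rewrite divfK ?gt_eqF.
have ht : t * `|b| <= del / c * `|b| by rewrite ler_wpM2r // ltW.
have hs : s * `|a| <= del / c * `|a| by rewrite ler_wpM2r // ltW.
have hc : 0 < del / c by rewrite divr_gt0.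
rewrite /c !mulrDr mulr1; lra.
Qed.

Lemma partialC g : C2 g -> forall j l x,
  partial l (partial j g) x = partial j (partial l g) x.
Proof.
move=> [dg ddg cdg] j l x.
set ej := basis_vec R j; set el := basis_vec R l.
set D1 := partial l (partial j g); set D2 := partial j (partial l g).
apply/eqP; rewrite -subr_eq0 -normr_le0; apply/ler_addgt0Pr => e e0; rewrite add0r.
have e2 : 0 < e / 2 by rewrite divr_gt0.
have /cvgrPdist_lt /(_ _ e2) near1 := cdg j l x.
have /cvgrPdist_lt /(_ _ e2) near2 := cdg l j x.
have [h1 h1_0 close1] := near_small_steps ej el near1.
have [h2 h2_0 close2] := near_small_steps el ej near2.
pose h := Num.min h1 h2; have h0 : 0 < h by rewrite lt_min h1_0 h2_0.
have [s1 [t1 [s1_h t1_h E1]]] := second_difference_mvt el x dg (ddg j) h0 h0.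
have [s2 [t2 [s2_h t2_h E2]]] := second_difference_mvt ej x dg (ddg l) h0 h0.
(* Both mixed partials are difference quotients of the same second difference. *)
have D12 : D1 (t1 *: el + (s1 *: ej + x)) = D2 (t2 *: ej + (s2 *: el + x)).
  apply: (mulfI (_ : h * h != 0)); first by rewrite mulf_neq0 // gt_eqF.
  rewrite -[LHS]E1 -[RHS]E2 -/ej -/el [h *: el + (h *: ej + x)]addrCA; ring.
have in_h1 r : 0 < r < h -> 0 < r < h1.
  by case/andP=> -> /lt_le_trans; apply; rewrite ge_min lexx.
have in_h2 r : 0 < r < h -> 0 < r < h2.
  by case/andP=> -> /lt_le_trans; apply; rewrite ge_min lexx orbT.
have c1 := close1 _ _ (in_h1 _ s1_h) (in_h1 _ t1_h).
have c2 := close2 _ _ (in_h2 _ s2_h) (in_h2 _ t2_h).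
have -> : D1 x - D2 x = (D1 x - D1 (t1 *: el + (s1 *: ej + x)))
                       - (D2 x - D2 (t2 *: ej + (s2 *: el + x))).
  by rewrite D12 opprB addrA subrK.
apply: le_trans (ler_normB _ _) _; rewrite [e]splitr.
exact: ltW (ltrD c1 c2).
Qed.

End SecondDerivatives.

Section Minimum.
Variables (R : realType) (n : nat).

Lemma partial_eq0_at_min (F : 'rV[R]_n -> R) xs j :
  (forall x, differentiable F x) -> (forall x, F xs <= F x) -> partial j F xs = 0.
Proof.
move=> dF Fmin; pose phi (t : R) := F (t *: basis_vec R j + xs).
have phi'0 (t : R) : is_derive t 1 phi ('D_(basis_vec R j) F (t *: basis_vec R j + xs)).
  exact: is_derive_line.
have : is_derive (0 : R) 1 phi 0.
  apply: (@derive1_at_min _ _ (-1) 1) => [|t _||t _].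
  - exact: (le_trans (lerN10 R) ler01).
  - by case: (phi'0 t).
  - by rewrite in_itv /= ltrN10 ltr01.
  - by rewrite /phi scale0r add0r Fmin.
case=> _ <-; case: (phi'0 0) => _ ->.
by rewrite scale0r add0r.
Qed.

Lemma sum_gradient_eq0_at_min N (f : 'I_N -> 'rV[R]_n -> R) xs :
  (forall i x, differentiable (f i) x) ->
  (forall x, \sum_i f i xs <= \sum_i f i x) -> \sum_i gradient (f i) xs = 0.
Proof.
move=> df fmin; apply/rowP => j; rewrite summxE mxE.
under eq_bigr do rewrite mxE.
rewrite /partial -derive_sum => [|i]; last exact: diff_derivable.
apply: partial_eq0_at_min => x; first exact: differentiable_sum.
by rewrite !fct_sumE.
Qed.

End Minimum.

Lemma increment01_le (R : realType) (psi dpsi : R -> R) (al be : R) :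
  (forall t : R, is_derive t 1 psi (dpsi t)) ->
  (forall t, 0 < t < 1 -> dpsi t <= al + be * (1 - t)) ->
  psi 1 - psi 0 <= al + be / 2.
Proof.
move=> psi_d dpsi_le.
(* P t = al t + be (t - t^2 / 2) is a primitive of the bound. *)
pose P : R -> R := al *: id + be *: (id - (2^-1 : R) *: (id * id)).
have P_d (t : R) : is_derive t 1 P (al + be * (1 - t)).
  apply: is_derive_eq.
  change (al * 1 + be * (1 - 2^-1 * (t * 1 + t * 1)) = al + be * (1 - t)); by field.
have chi_d (t : R) : is_derive t 1 (psi - P) (dpsi t - (al + be * (1 - t))).
  exact: is_deriveB.
have chi_cont : {within `[0, 1], continuous (psi - P)}.
  by apply: derivable_within_continuous => t _; case: (chi_d t).
have [c c01 chiE] := MVT ltr01 (fun t _ => chi_d t) chi_cont.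
have : (psi - P) 1 - (psi - P) 0 <= 0.
  by rewrite chiE subr0 mulr1 subr_le0 dpsi_le //; move: c01; rewrite in_itv.
change (psi 1 - (al * 1 + be * (1 - 2^-1 * (1 * 1)))
        - (psi 0 - (al * 0 + be * (0 - 2^-1 * (0 * 0)))) <= 0 ->
        psi 1 - psi 0 <= al + be / 2).
lra.
Qed.

Section GradientBounds.
Variables (R : realType) (n : nat) (f : 'rV[R]_n -> R).
Hypothesis f_C2 : C2 f.

Lemma hessian_sym x : (hessian f x)^T = hessian f x.
Proof. by apply/matrixP => j l; rewrite !mxE (partialC f_C2). Qed.

Lemma is_derive_gradient_line (a d u : 'rV[R]_n) (t : R) :
  is_derive t 1 (fun s : R => (gradient f (s *: d + a) *m u^T) 0 0)
    ((u *m hessian f (t *: d + a) *m d^T) 0 0).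
Proof.
have [_ ddf _] := f_C2.
pose h j := u 0 j *: (fun s : R => partial j f (s *: d + a)).
have -> : (fun s : R => (gradient f (s *: d + a) *m u^T) 0 0) = \sum_j h j.
  by apply: funext => s; rewrite fct_sumE mxE; apply: eq_bigr => j _; rewrite !mxE mulrC.
have h' j : is_derive t 1 (h j) (u 0 j *: 'D_d (partial j f) (t *: d + a)).
  by apply: is_deriveZ; exact: is_derive_line.
apply: is_derive_eq; rewrite [RHS]mxE.
under [RHS]eq_bigr do rewrite !mxE big_distrl /=.
rewrite exchange_big; apply: eq_bigr => j _.
rewrite derive_partialE // scaler_sumr; apply: eq_bigr => l _.
by rewrite mxE /GRing.scale /=; ring.
Qed.

Variables (mu L Lb : R).
Hypotheses (mu_ge0 : 0 <= mu) (L_ge0 : 0 <= L) (Lb_ge0 : 0 <= Lb).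
Hypothesis hess_loewner : forall x, loewner_between mu L (hessian f x).
Hypothesis hess_lip : forall x y, frob (hessian f x - hessian f y) <= Lb * frob (x - y).

Lemma gradient_lipschitz a b : frob (gradient f b - gradient f a) <= L * frob (b - a).
Proof.
apply: frob_le_dual => [|u]; first by rewrite mulr_ge0 ?frob_ge0.
pose psi (s : R) := (gradient f (s *: (b - a) + a) *m u^T) 0 0.
have -> : ((gradient f b - gradient f a) *m u^T) 0 0 = psi 1 - psi 0.
  by rewrite /psi scale1r scale0r add0r subrK mulmxBl mx_entryB.
have := @increment01_le R psi _ (L * frob (b - a) * frob u) 0
  (is_derive_gradient_line a (b - a) u).
rewrite mul0r addr0; apply => t _; rewrite mul0r addr0 mulrAC.
exact: loewner_form_le (hess_loewner _) _ _ mu_ge0 (hessian_sym _).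
Qed.

Lemma gradient_taylor xs xb xi :
  frob (gradient f xb - gradient f xs - (xb - xs) *m hessian f xi) <=
  Lb * frob (xb - xs) * frob (xi - xb) + Lb * frob (xb - xs) ^+ 2 / 2.
Proof.
set d := xb - xs; set H0 := hessian f xi.
apply: frob_le_dual => [|u].
  by rewrite addr_ge0 ?divr_ge0 ?mulr_ge0 ?frob_ge0 ?sqr_ge0.
set c := (u *m H0 *m d^T) 0 0.
pose psi := (fun s : R => (gradient f (s *: d + xs) *m u^T) 0 0) - c *: id.
have psi_d (t : R) : is_derive t 1 psi ((u *m hessian f (t *: d + xs) *m d^T) 0 0 - c *: 1).
  by apply: is_deriveB; exact: is_derive_gradient_line.
have -> : ((gradient f xb - gradient f xs - d *m H0) *m u^T) 0 0 = psi 1 - psi 0.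
  change (((gradient f xb - gradient f xs - d *m H0) *m u^T) 0 0 =
          (gradient f (1 *: d + xs) *m u^T) 0 0 - c * 1
              - ((gradient f (0 *: d + xs) *m u^T) 0 0 - c * 0)).
  have cE : c = (d *m H0 *m u^T) 0 0 by rewrite /c form_trmx /H0 hessian_sym.
  rewrite cE scale1r scale0r add0r /d subrK mulr1 mulr0 subr0 !mulmxBl !mx_entryB.
  ring.
apply: le_trans (increment01_le
  (al := Lb * frob d * frob (xi - xb) * frob u) (be := Lb * frob d ^+ 2 * frob u) psi_d _) _.
  move=> t /andP[_ t1]; rewrite -[c%:A]/(c * 1) mulr1 /c -mx_entryB -mulmxBl -mulmxBr.
  apply: le_trans (form_le_frob _ _ _) _.
  have lip : frob (hessian f (t *: d + xs) - H0) <= Lb * (frob (xi - xb) + (1 - t) * frob d).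
    apply: le_trans (hess_lip _ _) _; rewrite ler_wpM2l //.
    have -> : t *: d + xs - xi = - ((xi - xb) + (1 - t) *: d).
      by rewrite /d scalerBl scale1r scalerBr; apply/rowP => j; rewrite !mxE; ring.
    by rewrite frobN; apply: le_trans (ler_frobD _ _) _; rewrite frobZ ger0_norm // subr_ge0 ltW.
  have := ler_wpM2r (frob_ge0 d) (ler_wpM2l (frob_ge0 u) lip); lra.
lra.
Qed.

Lemma gradient_error_le x xb xs :
  frob (gradient f x - gradient f xs - (xb - xs) *m hessian f x) <=
  L * frob (x - xb) + Lb * frob (xb - xs) * frob (x - xb) + Lb * frob (xb - xs) ^+ 2 / 2.
Proof.
have -> : gradient f x - gradient f xs - (xb - xs) *m hessian f x =
    (gradient f x - gradient f xb) + (gradient f xb - gradient f xs - (xb - xs) *m hessian f x).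
  by rewrite !addrA subrK.
apply: le_trans (ler_frobD _ _) _; rewrite -[X in _ <= X]addrA.
exact: lerD (gradient_lipschitz _ _) (gradient_taylor _ _ _).
Qed.

End GradientBounds.

Section Averages.
Variables (R : realType) (N n : nat).
Implicit Types (M : 'M[R]_(N, n)).

Lemma avg_rows M : avg M = N%:R^-1 *: \sum_i row i M.
Proof.
apply/rowP => j; rewrite /avg -scalemxAl !mxE summxE; congr (_ * _).
by apply: eq_bigr => i _; rewrite !mxE mul1r.
Qed.

Lemma avgB M M' : avg (M - M') = avg M - avg M'.
Proof. by rewrite /avg mulmxBr. Qed.

Lemma avgZ (c : R) M : avg (c *: M) = c *: avg M.
Proof. by rewrite /avg -scalemxAr. Qed.

Lemma avg_mulmx (W : 'M[R]_N) M :
  (forall j, \sum_i W i j = 1) -> avg (W *m M) = avg M.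
Proof.
move=> W_col; rewrite /avg mulmxA -scalemxAl; congr (_ *: _ *m _); apply/rowP => j.
by rewrite !mxE -[RHS](W_col j); apply: eq_bigr => i _; rewrite mxE mul1r.
Qed.

Lemma row_ones_times (x : 'rV[R]_n) i : row i (ones_times N x) = x.
Proof. by apply/rowP => j; rewrite !mxE big_ord1 !mxE mul1r. Qed.

Lemma avg_frob_rows_le M : (0 < N)%N ->
  N%:R^-1 * \sum_i frob (row i M) <= frob M / Num.sqrt N%:R.
Proof.
move=> N_gt0; have r_gt0 : 0 < Num.sqrt (N%:R : R) by rewrite sqrtr_gt0 ltr0n.
apply: le_trans (ler_wpM2l _ (sum_frob_rows_le M)) _; first by rewrite invr_ge0 ler0n.
suff -> : N%:R^-1 * (Num.sqrt N%:R * frob M) = frob M / Num.sqrt N%:R by [].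
by rewrite -{1}(sqr_sqrtr (ler0n R N)); field; rewrite gt_eqF.
Qed.

End Averages.

Section NetworkGiantStep.
Variables (R : realType) (N n : nat) (f : 'I_N -> 'rV[R]_n -> R).
Variables (mu L Lbar gamma : R) (xstar : 'rV[R]_n) (X S : 'M[R]_(N, n)).
Hypotheses (N_gt0 : (0 < N)%N) (mu_gt0 : 0 < mu) (L_ge0 : 0 <= L) (Lbar_ge0 : 0 <= Lbar).
Hypothesis f_C2 : forall i, C2 (f i).
Hypothesis hess_loewner : forall i x, loewner_between mu L (hessian (f i) x).
Hypothesis hess_lip :
  forall i x y, frob (hessian (f i) x - hessian (f i) y) <= Lbar * frob (x - y).
Hypothesis grad_xstar : \sum_i gradient (f i) xstar = 0.
Hypothesis hess_gap : frob (H_tr f X - H_app f X) <= gamma.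

Let Hs i := hessian (f i) (row i X).
Let Hinv := N%:R^-1 *: \sum_i invmx (Hs i).
Let xb := avg X.
Let g := avg (grad_stack f X).
Let d := xb - xstar.
Let tracking_err := N%:R^-1 *: \sum_i (row i S - g) *m invmx (Hs i).
Let grad_err :=
  N%:R^-1 *: \sum_i (gradient (f i) (row i X) - gradient (f i) xstar - d *m Hs i).

Lemma invN_gt0 : 0 < (N%:R : R)^-1.
Proof. by rewrite invr_gt0 ltr0n. Qed.

Lemma Hinv_unit : Hinv \in unitmx.
Proof.
apply/posdef_unitmx/posdefZ; first exact: invN_gt0.
apply: (posdef_sum (Ordinal N_gt0)) => i.
exact/posdef_invmx/(loewner_posdef (hess_loewner _ _)).
Qed.

Lemma mulmx_Hinv_le (v : 'rV[R]_n) : frob (v *m Hinv) <= frob v / mu.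
Proof.
rewrite -scalemxAr frobZ ger0_norm ?(ltW invN_gt0) // mulmx_sumr.
apply: le_trans (ler_wpM2l (ltW invN_gt0) (ler_frob_sum _)) _.
apply: le_trans (ler_wpM2l (ltW invN_gt0)
  (ler_sum _ (fun i _ => loewner_invmx_le (hess_loewner i _) v mu_gt0))) _.
by rewrite sumr_const card_ord -[frob v / mu *+ N]mulr_natl mulKf // pnatr_eq0 -lt0n.
Qed.

Lemma avg_newton_stack : avg (newton_stack f X S) =
  d + (d *m (H_tr f X - H_app f X) + grad_err) *m Hinv + tracking_err.
Proof.
have -> : avg (newton_stack f X S) = tracking_err + g *m Hinv.
  rewrite avg_rows /tracking_err /Hinv -scalemxAr mulmx_sumr -scalerDr -big_split /=.
  congr (_ *: _); apply: eq_bigr => i _.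
  by rewrite mulmxBl subrK; apply/rowP => j; rewrite !mxE.
have -> : g = grad_err + d *m H_tr f X.
  rewrite /grad_err !sumrB grad_xstar subr0 -mulmx_sumr scalerBr scalemxAr subrK.
  rewrite /g avg_rows; congr (_ *: _).
  by apply: eq_bigr => i _; apply/rowP => j; rewrite !mxE.
have HappA (u : 'rV[R]_n) :
    u *m (H_tr f X - H_app f X) *m Hinv = u *m H_tr f X *m Hinv - u.
  rewrite mulmxBr mulmxBl (_ : H_app f X = invmx Hinv) //.
  by rewrite -[_ *m invmx Hinv *m Hinv]mulmxA mulVmx ?Hinv_unit // mulmx1.
rewrite (mulmxDl grad_err) (mulmxDl (d *m _)) HappA [RHS]addrC; congr (_ + _).
by rewrite addrA subrKC addrC.
Qed.

Let r := Num.sqrt (N%:R : R).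

Lemma hessian_gap_err_le : frob (d *m (H_tr f X - H_app f X) *m Hinv) <= gamma / mu * frob d.
Proof.
apply: le_trans (mulmx_Hinv_le _) _.
rewrite [X in _ <= X]mulrAC ler_wpM2r ?invr_ge0 ?(ltW mu_gt0) //.
by apply: le_trans (ler_frob_mulmx _ _) _; rewrite mulrC ler_wpM2r ?frob_ge0.
Qed.

Lemma tracking_err_le : frob tracking_err <= frob (S - ones_times N g) / (mu * r).
Proof.
rewrite /tracking_err frobZ ger0_norm ?(ltW invN_gt0) //.
apply: le_trans (ler_wpM2l (ltW invN_gt0) (ler_frob_sum _)) _.
apply: le_trans (ler_wpM2l (ltW invN_gt0)
  (ler_sum _ (fun i _ => loewner_invmx_le (hess_loewner i _) (row i S - g) mu_gt0))) _.
rewrite -mulr_suml mulrA [in X in _ <= X]invfM [in X in _ <= X]mulrA [X in _ <= X]mulrAC.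
rewrite ler_wpM2r ?invr_ge0 ?(ltW mu_gt0) //.
have := avg_frob_rows_le (S - ones_times N g) N_gt0.
by under eq_bigr do rewrite linearB /= row_ones_times.
Qed.

Lemma grad_err_le : frob (grad_err *m Hinv) <=
  (L + Lbar * frob d) * frob (X - ones_times N xb) / (mu * r) + Lbar * frob d ^+ 2 / (2 * mu).
Proof.
apply: le_trans (mulmx_Hinv_le _) _.
have err_le i : frob (gradient (f i) (row i X) - gradient (f i) xstar - d *m Hs i) <=
    (L + Lbar * frob d) * frob (row i (X - ones_times N xb)) + Lbar * frob d ^+ 2 / 2.
  rewrite [row i (_ - _)]linearB /= row_ones_times mulrDl.
  apply: le_trans (gradient_error_le (f_C2 i) (ltW mu_gt0) L_ge0 Lbar_ge0
    (hess_loewner i) (hess_lip i) (row i X) xb xstar) _.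
  by rewrite /d.
have mu_inv_ge0 : 0 <= mu^-1 by rewrite invr_ge0 ltW.
have Ld_ge0 : 0 <= L + Lbar * frob d by rewrite addr_ge0 ?mulr_ge0 ?frob_ge0.
rewrite /grad_err frobZ ger0_norm ?(ltW invN_gt0) //.
apply: le_trans (ler_wpM2r mu_inv_ge0 (ler_wpM2l (ltW invN_gt0) (ler_frob_sum _))) _.
apply: le_trans (ler_wpM2r mu_inv_ge0
  (ler_wpM2l (ltW invN_gt0) (ler_sum _ (fun i _ => err_le i)))) _.
rewrite big_split /= -mulr_sumr sumr_const card_ord -[Lbar * _ / 2 *+ N]mulr_natl.
rewrite mulrDr mulKf ?pnatr_eq0 -?lt0n // mulrCA.
have avg_le := avg_frob_rows_le (X - ones_times N xb) N_gt0.
apply: le_trans (ler_wpM2r mu_inv_ge0 (lerD (ler_wpM2l Ld_ge0 avg_le) (lexx _))) _.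
rewrite -/r; lra.
Qed.

Lemma network_giant_step_le (W : 'M[R]_N) (eta : R) :
  (forall j, \sum_i W i j = 1) -> 0 <= eta <= 1 ->
  frob (avg (W *m X - eta *: newton_stack f X S) - xstar) <=
    (1 - eta * (1 - gamma / mu)) * frob d
    + eta * Lbar / (mu * r) * frob (X - ones_times N xb) * frob d
    + eta * Lbar / (2 * mu) * frob d ^+ 2
    + eta / (mu * r) * frob (S - ones_times N g)
    + eta * L / (mu * r) * frob (X - ones_times N xb).
Proof.
move=> W_col /andP[eta_ge0 eta_le1].
have comb (u v w z : 'rV[R]_n) (c : R) :
    u - c *: (u - v + w + z) - v = (1 - c) *: (u - v) - c *: (w + z).
  by apply/rowP => j; rewrite !mxE; ring.
rewrite avgB avgZ avg_mulmx // avg_newton_stack comb -/d.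
apply: le_trans (ler_frobB _ _) _; rewrite !frobZ !ger0_norm ?subr_ge0 //.
have err_le : frob ((d *m (H_tr f X - H_app f X) + grad_err) *m Hinv + tracking_err) <=
    gamma / mu * frob d
    + ((L + Lbar * frob d) * frob (X - ones_times N xb) / (mu * r)
       + Lbar * frob d ^+ 2 / (2 * mu))
    + frob (S - ones_times N g) / (mu * r).
  rewrite mulmxDl; apply: le_trans (ler_frobD _ _) (lerD _ tracking_err_le).
  exact: le_trans (ler_frobD _ _) (lerD hessian_gap_err_le grad_err_le).
have := ler_wpM2l eta_ge0 err_le; lra.
Qed.

End NetworkGiantStep.

Unset Implicit Arguments.

Theorem theorem3 (R : realType) (N n : nat) (f : 'I_N -> 'rV[R]_n -> R)
  (mu L Lbar gamma eta : R) (xstar : 'rV[R]_n) (W : 'M[R]_N)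
  (X Y : nat -> 'M[R]_(N, n)) :
  (2 <= N)%N -> (1 <= n)%N ->
  0 < mu -> mu <= L ->
  (forall i, C2 (f i)) ->
  (forall i x, loewner_between mu L (hessian (f i) x)) ->
  (forall i x y, frob (hessian (f i) x - hessian (f i) y) <= Lbar * frob (x - y)) ->
  (forall x, x != xstar ->
     N%:R^-1 * \sum_(i < N) f i xstar < N%:R^-1 * \sum_(i < N) f i x) ->
  (forall Xm : 'M[R]_(N, n), frob (H_tr f Xm - H_app f Xm) <= gamma) ->
  consensus_matrix W ->
  specnorm (W - N%:R^-1 *: const_mx 1) < 1 ->
  (forall k, X k.+1 = W *m X k - eta *: newton_stack f (X k) (Y k)) ->
  (forall k, Y k.+1 = W *m Y k + grad_stack f (X k.+1) - grad_stack f (X k)) ->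
  Y 0%N = grad_stack f (X 0%N) ->
  gamma < mu -> 0 < eta < 1 ->
  forall k : nat,
    let xb := avg (X k) in
    let g := avg (grad_stack f (X k)) in
    frob (avg (X k.+1) - xstar) <=
      (1 - eta * (1 - gamma / mu)) * frob (xb - xstar)
      + eta * Lbar / (mu * Num.sqrt N%:R) * frob (X k - ones_times N xb) * frob (xb - xstar)
      + eta * Lbar / (2 * mu) * frob (xb - xstar) ^+ 2
      + eta / (mu * Num.sqrt N%:R) * frob (Y k - ones_times N g)
      + eta * L / (mu * Num.sqrt N%:R) * frob (X k - ones_times N xb).
Proof.
move=> N_ge2 n_ge1 mu_gt0 mu_le_L f_C2 hess_loewner hess_lip xstar_min hess_gap W_cons _
  X_step _ _ _ eta01 k.
have N_gt0 : (0 < N)%N by apply: leq_trans N_ge2.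
have L_ge0 : 0 <= L := le_trans (ltW mu_gt0) mu_le_L.
have Lbar_ge0 : 0 <= Lbar.
  pose y := basis_vec R (Ordinal n_ge1).
  have y_gt0 : 0 < frob (y - 0).
    rewrite subr0 frob_gt0; apply/eqP => /rowP/(_ (Ordinal n_ge1)).
    by rewrite !mxE !eqxx /= => /eqP; rewrite oner_eq0.
  rewrite -(pmulr_lge0 _ y_gt0).
  exact: le_trans (frob_ge0 _) (hess_lip (Ordinal N_gt0) y 0).
have grad_xstar : \sum_i gradient (f i) xstar = 0.
  apply: sum_gradient_eq0_at_min => [i x|x]; first by case: (f_C2 i).
  have [->|x_neq] := eqVneq x xstar; first by [].
  by rewrite -(ler_pM2l (_ : 0 < N%:R^-1)) ?invr_gt0 ?ltr0n // ltW // xstar_min.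
have [_ _ _ W_col _] := W_cons.
have [eta_gt0 eta_lt1] := andP eta01.
rewrite X_step; apply: network_giant_step_le => //.
by rewrite !ltW.
Qed.
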